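(* With the notation of the context, let $\bm x_\alpha,\bm x_\beta$ be sample points and let $\bm y_0=\bm x_\alpha,\bm y_1,\dots,\bm y_m=\bm x_\beta$ be all the sample points lying on the closed segment $[\bm x_\alpha,\bm x_\beta]$, ordered along the segment, with associated affine functions $v_0,\dots,v_m$ (the local pieces of $u^*$ at these sample points). Assume that for every $r=0,\dots,m-1$, $$\big(v_r(\bm y_r)-v_{r+1}(\bm y_r)\big)\cdot\big(v_r(\bm y_{r+1})-v_{r+1}(\bm y_{r+1})\big)\le 0$$ (this is the termination condition of the bisection procedure that repeatedly inserts midpoints between consecutive sample points on the segment whenever the two signs agree). Then for all sample points $\bm x_i,\bm x_k$ lying on $[\bm x_\alpha,\bm x_\beta]$, $$\min_{j\in J_{\geq,i}}u_j(\bm x_k)\le u_k(\bm x_k)\qquad\text{and}\qquad \max_{j\in J_{\leq,i}}u_j(\bm x_k)\ge u_k(\bm x_k).$$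
   Context: Let $\Omega\subseteq\mathbb{R}^{n_x}$ be a convex polyhedron and $u^*:\Omega\to\mathbb{R}$ a continuous piecewise affine (PWA) function: $\Omega$ is the union of finitely many closed convex polyhedra (local regions) with pairwise disjoint interiors, and on each local region $u^*$ coincides with an affine function (its local piece). Sample points $\bm x_1,\dots,\bm x_{N_s}\in\Omega$ are given, each lying in the interior of a unique order (UO) region $\Gamma(\bm x_i)$ (a closed polyhedron inside a local region on whose interior the order of all distinct local pieces of $u^*$ is constant; equivalently, no two distinct local pieces of $u^*$ take equal values at $\bm x_i$), and $u_i$ denotes the local piece of $u^*$ on $\Gamma(\bm x_i)$, so $u_i(\bm x_i)=u^*(\bm x_i)$. Define $J_{\geq,i}=\{j\in\{1,\dots,N_s\}: u_j(\bm x_i)\ge u_i(\bm x_i)\}$ and $J_{\leq,i}=\{j\in\{1,\dots,N_s\}: u_j(\bm x_i)\le u_i(\bm x_i)\}$. *)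

From HB Require Import structures.
From mathcomp Require Import all_boot all_order all_algebra.
From mathcomp Require Import all_classical all_reals all_analysis.
Set Implicit Arguments. Unset Strict Implicit. Unset Printing Implicit Defensive.
Import Order.TTheory GRing.Theory Num.Theory.
Import numFieldNormedType.Exports.
Local Open Scope classical_set_scope.
Local Open Scope ring_scope.

Definition dotp (R : realType) (n : nat) (a x : 'rV[R]_n) : R :=
  \sum_(j < n) a 0 j * x 0 j.

(* An affine function x |-> a . x + b, represented by the pair (a, b). *)
Definition affine (R : realType) (n : nat) := ('rV[R]_n * R)%type.

Definition aeval (R : realType) (n : nat) (f : affine R n) (x : 'rV[R]_n) : R :=
  dotp f.1 x + f.2.

Definition polyhedron (R : realType) (n : nat) (hs : seq ('rV[R]_n * R)) :
  set 'rV[R]_n := [set x | all (fun h => dotp h.1 x <= h.2) hs].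

Definition segment (R : realType) (n : nat) (a b : 'rV[R]_n) : set 'rV[R]_n :=
  [set x | exists2 t : R, 0 <= t <= 1 & x = (1 - t) *: a + t *: b].

(* Gamma is a unique order (UO) region of the PWA partition
   (regions P : 'I_L -> set, local pieces pc : 'I_L -> affine) lying in the
   local region l: Gamma is a closed polyhedron contained in P l, and on the
   interior of Gamma the order of all distinct local pieces is constant. *)
Definition UO_region (R : realType) (n L : nat)
  (P : 'I_L -> set 'rV[R]_n) (pc : 'I_L -> affine R n)
  (Gamma : set 'rV[R]_n) (l : 'I_L) : Prop :=
  [/\ exists hs : seq ('rV[R]_n * R), Gamma = polyhedron hs,
      Gamma `<=` P l &
      forall (p q : 'I_L), pc p <> pc q ->
      forall x y, interior Gamma x -> interior Gamma y ->
        (aeval (pc p) x < aeval (pc q) x) = (aeval (pc p) y < aeval (pc q) y)].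

(* Index the sample points on the segment by p = 0..m and write G j p for the
   value of the piece v_j at y_p, so that G p p = u^*(y_p).  Along the segment
   every difference v_j - v_j' is affine in the position, hence changes sign at
   most once.  Given a <= b, take the last j0 in [a, b] with v_j0(y_a) >= u^*(y_a).
   Sweeping p from j0 to b, the termination condition at each step together with
   the single sign change keeps v_j0(y_p) <= u^*(y_p); at p = b this is the claim.
   The case a > b is the same argument on the reversed segment. *)

From HB Require Import structures.
From mathcomp Require Import all_boot all_order all_algebra.
From mathcomp Require Import all_classical all_reals all_analysis.
From mathcomp Require Import zify ring lra.
Set Implicit Arguments.
Unset Strict Implicit.
Unset Printing Implicit Defensive.
Import Order.TTheory GRing.Theory Num.Theory.
Import numFieldNormedType.Exports.
Local Open Scope classical_set_scope.
Local Open Scope ring_scope.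

Section SweepAlongSegment.
Variable R : realFieldType.

Definition bisection_terminated (G : nat -> nat -> R) (m : nat) :=
  forall k, (k < m)%N -> (G k k - G k.+1 k) * (G k k.+1 - G k.+1 k.+1) <= 0.

Definition single_crossing (G : nat -> nat -> R) (m : nat) :=
  forall j j' p q r, (p <= m)%N -> (r <= m)%N -> ((p <= q <= r) || (r <= q <= p))%N ->
  G j' p < G j p -> G j q <= G j' q -> G j r <= G j' r.

Definition rev_grid (G : nat -> nat -> R) (m : nat) j p := G (m - j)%N (m - p)%N.

Lemma affine_sign_persists (A c tp tq tr : R) :
  0 < A + tp * c -> A + tq * c <= 0 -> (tp <= tq <= tr) \/ (tr <= tq <= tp) ->
  A + tr * c <= 0.
Proof.
move=> ? ? [/andP[? ?]|/andP[? ?]]; case: (lerP c 0) => ?.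
- have : 0 <= (tr - tq) * - c by apply: mulr_ge0; lra.
  nra.
- have : 0 <= (tq - tp) * c by apply: mulr_ge0; lra.
  nra.
- have : 0 <= (tp - tq) * - c by apply: mulr_ge0; lra.
  nra.
- have : 0 <= (tq - tr) * c by apply: mulr_ge0; lra.
  nra.
Qed.

Lemma single_crossing_affine (G : nat -> nat -> R) (A C t : nat -> R) m :
  (forall j p, G j p = A j + t p * C j) ->
  (forall p q, (p <= q <= m)%N -> t p <= t q) ->
  single_crossing G m.
Proof.
move=> GE tmono j j' p q r pm rm pqr; rewrite -subr_gt0 -subr_le0 => h1 h2.
rewrite -subr_le0; move: h1 h2; rewrite !GE.
have E s : A j + t s * C j - (A j' + t s * C j') =
           (A j - A j') + t s * (C j - C j') by ring.
rewrite !E => /affine_sign_persists sign /sign; apply.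
by case/orP: pqr => /andP[? ?]; [left|right]; rewrite !tmono //; lia.
Qed.

Lemma bisection_terminated_rev G m :
  bisection_terminated G m -> bisection_terminated (rev_grid G m) m.
Proof.
move=> Hterm k km; rewrite /rev_grid.
have -> : (m - k = (m - k.+1).+1)%N by lia.
by rewrite mulrC -mulrNN !opprB; apply: Hterm; lia.
Qed.

Lemma single_crossing_rev G m :
  single_crossing G m -> single_crossing (rev_grid G m) m.
Proof.
move=> Hcross j j' p q r pm rm pqr; apply: Hcross; lia.
Qed.

Section Forward.
Variables (G : nat -> nat -> R) (m : nat).
Hypotheses (Hterm : bisection_terminated G m) (Hcross : single_crossing G m).

Lemma dominated_sweep_step a j0 k : (a <= j0 <= k)%N -> (k < m)%N ->
  (forall j, (j0 < j <= k.+1)%N -> G j a < G j0 a) ->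
  G j0 k <= G k k -> G j0 k.+1 <= G k.+1 k.+1.
Proof.
move=> /andP[aj0 j0k] km below dom_k.
have cross j : (j0 < j <= k.+1)%N -> G j0 k <= G j k -> G j0 k.+1 <= G j k.+1.
  by move=> jr; apply: (@Hcross _ _ a k); [lia | lia | lia | exact: below].
have [up|] := ltrP (G k.+1 k.+1) (G k k.+1).
  have down : G k k <= G k.+1 k.
    by have := Hterm km; rewrite pmulr_lle0 ?subr_gt0 // subr_le0.
  by apply: cross; [lia | exact: le_trans down].
move=> low; have [->//|j0k'] : j0 = k \/ (j0 < k)%N by lia.
by apply: le_trans low; apply: cross => //; lia.
Qed.

Lemma piece_dominating_forward a b : (a <= b <= m)%N ->
  exists2 j, G a a <= G j a & G j b <= G b b.
Proof.
move=> /andP[ab bm].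
pose P j := (a <= j <= b)%N && (G a a <= G j a).
have Pa : P a by rewrite /P leqnn ab lexx.
have Pb j : P j -> (j <= b)%N by case/andP=> /andP[].
case: (ex_maxnP (ex_intro _ a Pa) Pb) => j0 /andP[/andP[aj0 j0b] Hj0] j0max.
have below j : (j0 < j <= b)%N -> G j a < G j0 a.
  move=> jr; rewrite ltNge; apply/negP => le_j.
  by have := j0max j; rewrite /P (le_trans Hj0 le_j) andbT; lia.
have dom q : (j0 <= q <= b)%N -> G j0 q <= G q q.
  elim: q => [|q IH] qr; first by have -> : j0 = 0%N by lia.
  case: (eqVneq j0 q.+1) => [-> //|j0q].
  apply: (@dominated_sweep_step a); [lia | lia | | apply: IH; lia].
  by move=> j jr; apply: below; lia.
by exists j0 => //; apply: dom; lia.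
Qed.

End Forward.

Lemma piece_dominating G m a b :
  bisection_terminated G m -> single_crossing G m -> (a <= m)%N -> (b <= m)%N ->
  exists2 j, G a a <= G j a & G j b <= G b b.
Proof.
move=> Hterm Hcross am bm; have [ab|ba] := leqP a b.
  by apply: (piece_dominating_forward Hterm Hcross); rewrite ab bm.
have [j] := piece_dominating_forward (bisection_terminated_rev Hterm)
  (single_crossing_rev Hcross) (a := (m - a)%N) (b := (m - b)%N) ltac:(lia).
by rewrite /rev_grid !subKn //; exists (m - j)%N.
Qed.

End SweepAlongSegment.

Section Segments.
Variables (R : realType) (n : nat).
Implicit Types (a b c : 'rV[R]_n) (f : affine R n).

Lemma dotp_segment c a b t :
  dotp c ((1 - t) *: a + t *: b) = dotp c a + t * (dotp c b - dotp c a).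
Proof.
rewrite /dotp mulrBr !mulr_sumr -!sumrB -big_split /=.
by apply: eq_bigr => j _; rewrite !mxE; ring.
Qed.

Lemma aeval_segment f a b t :
  aeval f ((1 - t) *: a + t *: b) = aeval f a + t * (aeval f b - aeval f a).
Proof. rewrite /aeval dotp_segment; ring. Qed.

Lemma dotp_diff_ge0 a b : 0 <= dotp (b - a) b - dotp (b - a) a.
Proof.
rewrite /dotp -sumrB; apply: sumr_ge0 => j _.
rewrite -mulrBr; have -> : b 0 j - a 0 j = (b - a) 0 j by rewrite !mxE.
by rewrite -expr2 sqr_ge0.
Qed.

Lemma segment_param_lt a b t s :
  dotp (b - a) ((1 - t) *: a + t *: b) < dotp (b - a) ((1 - s) *: a + s *: b) ->
  t < s.
Proof. by rewrite !dotp_segment; have := dotp_diff_ge0 a b; nra. Qed.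

End Segments.

Theorem mainTheorem4
  (R : realType) (n : nat)
  (* Omega: a convex polyhedron *)
  (omegaH : seq ('rV[R]_n * R))
  (* the PWA function u^* with L local regions (closed convex polyhedra) *)
  (ustar : 'rV[R]_n -> R) (L : nat)
  (regH : 'I_L -> seq ('rV[R]_n * R)) (pc : 'I_L -> affine R n)
  (Hcont : {within polyhedron omegaH, continuous ustar})
  (Hcover : polyhedron omegaH = \bigcup_(l in [set: 'I_L]) polyhedron (regH l))
  (Hdisj : forall l l' : 'I_L, l != l' ->
      interior (polyhedron (regH l)) `&` interior (polyhedron (regH l')) = set0)
  (Hpiece : forall (l : 'I_L) x, polyhedron (regH l) x -> ustar x = aeval (pc l) x)
  (* sample points x_i, each in the interior of a UO region, u_i its local piece *)
  (Ns : nat) (xs : 'I_Ns -> 'rV[R]_n) (us : 'I_Ns -> affine R n)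
  (Hsample : forall i : 'I_Ns, exists (Gamma : set 'rV[R]_n) (l : 'I_L),
      [/\ UO_region (fun l => polyhedron (regH l)) pc Gamma l,
          interior Gamma (xs i) & us i = pc l])
  (* the segment [x_alpha, x_beta] and the sample points y_0, ..., y_m on it *)
  (alpha beta : 'I_Ns) (m : nat) (ys : 'I_m.+1 -> 'I_Ns)
  (Hy0 : xs (ys ord0) = xs alpha)
  (Hym : xs (ys ord_max) = xs beta)
  (Hyseg : forall r, segment (xs alpha) (xs beta) (xs (ys r)))
  (Hyall : forall i, segment (xs alpha) (xs beta) (xs i) ->
      exists r, xs (ys r) = xs i)
  (Hyord : forall r r' : 'I_m.+1, (r < r')%N ->
      dotp (xs beta - xs alpha) (xs (ys r)) < dotp (xs beta - xs alpha) (xs (ys r')))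
  (* termination condition of the bisection procedure *)
  (Hterm : forall r : 'I_m.+1, forall r1 : 'I_m.+1, val r1 = (val r).+1 ->
      (aeval (us (ys r)) (xs (ys r)) - aeval (us (ys r1)) (xs (ys r))) *
      (aeval (us (ys r)) (xs (ys r1)) - aeval (us (ys r1)) (xs (ys r1))) <= 0) :
  forall i k : 'I_Ns,
    segment (xs alpha) (xs beta) (xs i) -> segment (xs alpha) (xs beta) (xs k) ->
    (exists2 j : 'I_Ns, aeval (us i) (xs i) <= aeval (us j) (xs i)
                       & aeval (us j) (xs k) <= aeval (us k) (xs k)) /\
    (exists2 j : 'I_Ns, aeval (us j) (xs i) <= aeval (us i) (xs i)
                       & aeval (us k) (xs k) <= aeval (us j) (xs k)).
Proof.
(* Distinct indices may share a location, so u_i(x_i) is read off u^*. *)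
have ustarE i : aeval (us i) (xs i) = ustar (xs i).
  have [Gamma [l [[_ sub _] /interior_subset/sub x_l ->]]] := Hsample i.
  by rewrite (Hpiece _ _ x_l).
have /choice[t Ht] :
    forall r, exists t, xs (ys r) = (1 - t) *: xs alpha + t *: xs beta.
  by move=> r; have [s _ ->] := Hyseg r; exists s.
pose G j p := aeval (us (ys (inord j))) (xs (ys (inord p))).
have Gterm : bisection_terminated G m.
  by move=> k km; apply: Hterm; rewrite /= !inordK //; lia.
have Gcross : single_crossing G m.
  pose f j := us (ys (inord j)).
  apply: (@single_crossing_affine _ G (fun j => aeval (f j) (xs alpha))
    (fun j => aeval (f j) (xs beta) - aeval (f j) (xs alpha)) (fun p => t (inord p)))
    => [j p|p q pqm].
    by rewrite /G Ht aeval_segment.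
  have [->//|pq] : p = q \/ (p < q)%N by lia.
  apply/ltW/(segment_param_lt (a := xs alpha) (b := xs beta)).
  by rewrite -!Ht; apply: Hyord; rewrite !inordK //; lia.
have dom i k : segment (xs alpha) (xs beta) (xs i) -> segment (xs alpha) (xs beta) (xs k) ->
    exists2 j, aeval (us i) (xs i) <= aeval (us j) (xs i)
             & aeval (us j) (xs k) <= aeval (us k) (xs k).
  move=> /Hyall[ri ei] /Hyall[rk ek].
  have [j] := piece_dominating Gterm Gcross (ltn_ord ri) (ltn_ord rk).
  rewrite /G !inord_val !ustarE ei ek -!ustarE.
  by exists (ys (inord j)).
move=> i k si sk; split; first exact: dom.
by have [j] := dom k i sk si; exists j.
Qed.
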